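(* Let $G=(V,E)$ be a multigraph with $|V|=s\ge 2$ vertices, and let $v\in V$. Suppose that $\deg(v)\ge 1$ and $\deg(u)\ge 3$ for all $u\in V\setminus\{v\}$. Then $G$ contains a path $(p_1,p_2,\dots,p_k)$ and a cycle $(c_1,c_2,\dots,c_\ell)$ such that $p_1=v$, $p_k=c_1$, $k\ge 1$, $\ell\ge 1$, and $k+\ell\le 4\log(s)$.
   Context: A multigraph is a graph that may contain parallel edges and (possibly parallel) self-loops. The degree of a vertex is the number of incident edges, where a self-loop contributes two to the degree. A path $(p_1,\dots,p_k)$ is a sequence of $k$ distinct vertices with consecutive ones adjacent (a path with $k=1$ is a single vertex). A cycle $(c_1,\dots,c_\ell)$ on $\ell$ vertices: for $\ell=1$ it is a self-loop at $c_1$, for $\ell=2$ it is a pair of parallel edges between $c_1$ and $c_2$, and for $\ell\ge3$ it is an ordinary cycle through distinct vertices $c_1,\dots,c_\ell$. Logarithms are base 2. *)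

From mathcomp Require Import all_boot.
From Stdlib Require Import Rdefinitions Rfunctions Rpower.

Set Implicit Arguments.
Unset Strict Implicit.
Unset Printing Implicit Defensive.

(* A multigraph on vertex type T: a finite type E of edges, each edge e
   having (unordered) endpoints [ends e = (a, b)]; a self-loop is an edge
   with [ends e = (u, u)].  Parallel edges are distinct elements of E
   with the same endpoints. *)

Section MultiGraph.
Variables (T E : finType) (ends : E -> T * T).

(* degree: every edge end at u counts once, so a self-loop counts twice *)
Definition deg (u : T) : nat :=
  #|[set e | (ends e).1 == u]| + #|[set e | (ends e).2 == u]|.

Definition joins (e : E) (x y : T) : bool :=
  (ends e == (x, y)) || (ends e == (y, x)).

Definition adj (x y : T) : bool := [exists e, joins e x y].

Definition is_path (p : seq T) : bool :=
  [&& p != [::], uniq p & sorted adj p].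

Definition is_cycle (c : seq T) : bool :=
  match c with
  | [::] => false
  | [:: x] => [exists e, ends e == (x, x)]
  | [:: x; y] => (x != y) &&
      [exists e1, exists e2, [&& e1 != e2, joins e1 x y & joins e2 x y]]
  | _ => uniq c && cycle adj c
  end.

End MultiGraph.

Definition log2 (x : R) : R := (ln x / ln 2)%R.

(* Call such a configuration of total size at most K a lollipop of size K.
   If there is no small lollipop, paths from v branch: the endpoint of a path
   carries no loop, no parallel edges, and no edge back to the path except to
   its predecessor, since each would close a short lollipop; so all but one
   of its edges lead to distinct fresh vertices ([growth], [branching]).
   Hence there are at least 2^(J-1) paths from v on at most J vertices
   ([level_paths], [short_paths]).  For J = floor(log2 s) + 2 these are more
   than s, so two distinct ones share their endpoint ([pigeonhole]); where
   they diverge they close a cycle ([two_paths_lollipop]).  This yields a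
   lollipop of size 2 floor(log2 s) + 3 ([lollipop_log]), or of size 4 when
   s = 2 ([lollipop_tiny]); finally 2^K <= s^4 gives K <= 4 log2 s. *)

From mathcomp Require Import all_boot zify.
From Stdlib Require Import Reals Lra Lia Classical.
From mathcomp Require Import ssrnat.

Set Implicit Arguments.
Unset Strict Implicit.
Unset Printing Implicit Defensive.

Lemma sumn_map_ge (A : eqType) (g : nat) (f : A -> nat) (s : seq A) :
  (forall x, x \in s -> g <= f x) -> g * size s <= sumn [seq f x | x <- s].
Proof.
elim: s => [|x s IHs] f_ge /=; first by rewrite muln0.
rewrite mulnS leq_add ?f_ge ?mem_head // IHs // => y y_s.
by rewrite f_ge // in_cons y_s orbT.
Qed.

Lemma uniq_extensions (A : eqType) (L : seq (seq A)) (f : seq A -> seq A) :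
  uniq L -> (forall p, uniq (f p)) -> uniq [seq rcons p w | p <- L, w <- f p].
Proof.
elim: L => [//|p L IHL] /= /andP [p_L UL] Uf.
rewrite cat_uniq (map_inj_uniq (@rcons_injr _ p)) Uf IHL // andbT /=.
apply/hasPn => q /allpairsPdep [p' [w' [p'_L _ ->]]].
apply/mapP => -[w _ /rcons_inj [p_eq _]].
by move: p_L; rewrite -p_eq p'_L.
Qed.

Lemma pigeonhole (A : eqType) (T : finType) (f : A -> T) (s : seq A) :
  uniq s -> #|T| < size s ->
  exists x y, [/\ x \in s, y \in s, x != y & f x = f y].
Proof.
move=> Us large; apply: NNPP => no_collision.
have f_inj : {in s &, injective f}.
  move=> x y x_s y_s fxy; have [//|x_neq_y] := eqVneq x y.
  by case: no_collision; exists x, y.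
have := max_card (mem (map f s)).
by rewrite (card_uniqP _) ?size_map ?map_inj_in_uniq // leqNgt large.
Qed.

Section Multigraph.
Variables (T E : finType) (ends : E -> T * T).
Local Notation adj := (adj ends).

Lemma adjC (x y : T) : adj x y = adj y x.
Proof. by apply/existsP/existsP => -[e He]; exists e; rewrite /joins orbC. Qed.

Lemma is_cycle_long (c : seq T) :
  2 < size c -> is_cycle ends c = uniq c && cycle adj c.
Proof. by case: c => [|a [|b [|d r]]]. Qed.

Lemma join_cycle (x : T) (pre : seq T) (w : T) (b : seq T) :
  path adj x (rcons pre w) -> path adj x (rcons b w) ->
  uniq (x :: pre ++ w :: b) -> 0 < size pre + size b ->
  is_cycle ends (x :: pre ++ w :: rev b).
Proof.
move=> Ppre Pb U nontriv.
rewrite is_cycle_long; last by rewrite /= size_cat /= size_rev; lia.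
apply/andP; split.
  rewrite (perm_uniq (_ : perm_eq _ (x :: pre ++ w :: b))) //.
  by rewrite perm_cons perm_cat2l perm_cons perm_rev.
rewrite /= rcons_cat rcons_cons cat_path /=.
move: Ppre; rewrite rcons_path => /andP [-> ->] /=.
have : path (fun y z => adj z y) x (rcons b w).
  by rewrite -(eq_path (e := adj)) // => y z; rewrite adjC.
by rewrite -rev_path last_rcons belast_rcons rev_cons.
Qed.

Lemma diverge (x : T) (a b : seq T) :
  uniq (x :: a) -> path adj x a -> uniq (x :: b) -> path adj x b ->
  has (mem b) a -> head x a != head x b ->
  exists2 c, is_cycle ends c & head x c = x /\ size c <= size a + size b.
Proof.
move=> + + Ub Pb a_meets_b.
case/split_find: a_meets_b => w pre post w_b pre_b Ua Pa.
case/splitPr: w_b Ub Pb pre_b => b1 b2 Ub Pb pre_b diff_heads.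
exists (x :: pre ++ w :: rev b1).
  apply: join_cycle.
  - by move: Pa; rewrite cat_path => /andP [].
  - by move: Pb; rewrite -cat_rcons cat_path => /andP [].
  - rewrite -cat_rcons -cat_cons cat_uniq; apply/and3P; split.
    + by move: Ua; rewrite -cat_cons cat_uniq => /andP [].
    + apply/hasPn => y y_b1; rewrite in_cons mem_rcons in_cons !negb_or.
      move: Ub; rewrite cons_uniq mem_cat cat_uniq.
      case/andP => x_b /and3P [_ w_b1 _].
      apply/and3P; split.
      * by apply: contraNneq x_b => <-; rewrite y_b1.
      * apply: contraNneq w_b1 => <-.
        by apply/hasP; exists y; rewrite ?mem_head.
      * apply: contra pre_b => y_pre; apply/hasP; exists y => //.
        by rewrite inE mem_cat y_b1.
    + by move: Ub; rewrite cons_uniq cat_uniq => /andP [_ /andP []].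
  - by move: diff_heads; case: pre {Pa Ua pre_b}; case: b1 {Pb Ub} => //=;
      rewrite eqxx.
by split => //; rewrite /= !size_cat /= size_rev size_rcons; lia.
Qed.

(* Two distinct paths from [x] with a common endpoint share a prefix ending
   at the [i]-th vertex of the first one, where they diverge and, by
   [diverge], close a cycle. *)
Lemma two_paths (x : T) (a b : seq T) :
  uniq (x :: a) -> path adj x a -> uniq (x :: b) -> path adj x b ->
  last x a = last x b -> a != b ->
  exists i c, [/\ i <= size a, is_cycle ends c, nth x (x :: a) i = head x c
                & i + size c <= size a + size b].
Proof.
elim: a x b => [|y a IHa] x [|z b] Ua Pa Ub Pb same_end a_neq_b //.
- move: Ub same_end => /= /andP [x_notin_b _] x_last.
  by move: x_notin_b; rewrite x_last mem_last.
- move: Ua same_end => /= /andP [x_notin_a _] x_last.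
  by move: x_notin_a; rewrite -x_last mem_last.
case: (eqVneq y z) Ub Pb same_end a_neq_b
  => [<-|y_neq_z] Ub Pb same_end a_neq_b.
  move: Ua Ub Pa Pb => /= /andP [_ Ua] /andP [_ Ub] /andP [_ Pa] /andP [_ Pb].
  have [|i [c [i_le cyc_c nth_c size_c]]] := IHa y b Ua Pa Ub Pb same_end.
    by apply: contra a_neq_b => /eqP ->.
  exists i.+1, c; split => //=.
  - case: c cyc_c nth_c {size_c} => [//|c0 c] _ /= <-.
    by apply: set_nth_default; rewrite /=; lia.
  - lia.
have meet : has (mem (z :: b)) (y :: a).
  apply/hasP; exists (last y a); first exact: mem_last.
  by move: same_end => /= ->; apply: mem_last.
have [c cyc_c [head_c size_c]] := diverge Ua Pa Ub Pb meet y_neq_z.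
by exists 0, c.
Qed.

Definition lollipop (v : T) (K : nat) : Prop := exists p c : seq T,
  [/\ is_path ends p, is_cycle ends c, head v p = v, last v p = head v c
    & size p + size c <= K].

Lemma lollipop_mono (v : T) (K K' : nat) :
  K <= K' -> lollipop v K -> lollipop v K'.
Proof.
move=> le_K [p [c [Pp Cc hp pc size_pc]]].
by exists p, c; split => //; apply: leq_trans le_K.
Qed.

Lemma no_lollipop_pred (v : T) (K : nat) :
  ~ lollipop v K.+1 -> ~ lollipop v K.
Proof. by move=> no_lol l; apply/no_lol/(lollipop_mono _ l). Qed.

Lemma lollipop_prefix (v : T) (p c : seq T) (i : nat) :
  is_path ends p -> head v p = v -> is_cycle ends c -> i < size p ->
  nth v p i = head v c -> lollipop v (i.+1 + size c).
Proof.
case/and3P=> p_nil Up Sp head_p Cc lt_i nth_i.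
exists (take i.+1 p), c; split => //.
- apply/and3P; split; [by case: p p_nil {Up Sp head_p lt_i nth_i}
                      | exact: take_uniq | exact: take_sorted].
- by case: p p_nil {Up Sp lt_i nth_i} head_p.
- by rewrite -nth_i -nth_last size_takel // nth_take.
- by rewrite size_takel.
Qed.

Lemma two_paths_lollipop (v : T) (p q : seq T) :
  is_path ends p -> head v p = v -> is_path ends q -> head v q = v ->
  last v p = last v q -> p != q -> lollipop v (size p + size q).-1.
Proof.
case: p q => [//|x a] [//|y b] Pp /= hx Pq /= hy; subst x y => same_end p_neq_q.
move: (Pp) (Pq) => /and3P [_ Ua Pa] /and3P [_ Ub Pb].
have a_neq_b : a != b by apply: contra p_neq_q => /eqP ->.
have [i [c [le_i Cc nth_i size_c]]] := two_paths Ua Pa Ub Pb same_end a_neq_b.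
apply: lollipop_mono (lollipop_prefix Pp erefl Cc _ nth_i); rewrite /=; lia.
Qed.

Lemma deg_le_neighbours (u : T) :
  (forall e, ends e != (u, u)) ->
  (forall e1 e2 w, joins ends e1 u w -> joins ends e2 u w -> e1 = e2) ->
  deg ends u <= #|[set w | adj u w]|.
Proof.
move=> no_loop no_parallel.
set A1 := [set e | (ends e).1 == u]; set A2 := [set e | (ends e).2 == u].
have -> : deg ends u = #|A1 :|: A2|.
  rewrite cardsU (_ : A1 :&: A2 = set0) ?cards0 ?subn0 //.
  apply/setP => e; rewrite !inE; apply/negP => /andP [/eqP e1 /eqP e2].
  by move/negP: (no_loop e); apply; rewrite [ends e]surjective_pairing e1 e2.
pose other e := if (ends e).1 == u then (ends e).2 else (ends e).1.
have joins_other e : e \in A1 :|: A2 -> joins ends e u (other e).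
  rewrite !inE /other /joins; case: eqP => [<- _|_ /= /eqP <-].
    by rewrite -surjective_pairing eqxx.
  by rewrite -surjective_pairing eqxx orbT.
have other_inj : {in A1 :|: A2 &, injective other}.
  move=> e1 e2 /joins_other j1 /joins_other j2 same.
  by apply: no_parallel j1 _; rewrite same.
rewrite -(card_in_imset other_inj); apply: subset_leq_card.
apply/subsetP => _ /imsetP [e /joins_other j ->].
by rewrite inE; apply/existsP; exists e.
Qed.

(* Without a lollipop of size [size p + 1], the endpoint of a path [p] from [v]
   is adjacent to no earlier vertex of [p] except its predecessor: an edge
   back to any other vertex closes a cycle on the end of [p]. *)
Lemma back_neighbour (v : T) (p : seq T) (w : T) :
  is_path ends p -> head v p = v -> ~ lollipop v (size p).+1 ->
  w \in p -> w != last v p -> adj (last v p) w -> w = nth v p (size p).-2.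
Proof.
move=> + + + w_p; case/splitPr: w_p => p1 p2 Pp head_p no_lol.
case: p2 Pp head_p no_lol => [|y1 [|y2 r]] Pp head_p no_lol w_neq last_w.
- by rewrite last_cat eqxx in w_neq.
- by rewrite size_cat addn2 nth_cat ltnn subnn.
have cyc : is_cycle ends [:: w, y1, y2 & r].
  rewrite is_cycle_long //; case/and3P: Pp => _ Up Sp; apply/andP; split.
    by move: Up; rewrite cat_uniq => /and3P [].
  rewrite /= rcons_path; move: Sp last_w.
  by rewrite sorted_cat_cons last_cat /= => /andP [_ /and3P [-> -> ->]] ->.
case: no_lol.
apply: lollipop_mono (lollipop_prefix (i := size p1) Pp head_p cyc _ _).
- by rewrite size_cat /=; lia.
- by rewrite size_cat /= addnS ltnS leq_addr.
- by rewrite nth_cat ltnn subnn.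
Qed.

Definition extensions (v : T) (p : seq T) : {set T} :=
  [set w | adj (last v p) w & w \notin p].

(* Without a lollipop of size [size p + 1], the endpoint of a path [p] from
   [v] carries no loop: [p] followed by the loop would be one. *)
Lemma no_loop_at_end (v : T) (p : seq T) :
  is_path ends p -> head v p = v -> ~ lollipop v (size p).+1 ->
  forall e, ends e != (last v p, last v p).
Proof.
move=> Pp head_p no_lol e; apply/negP => loop_e; apply: no_lol.
exists p, [:: last v p]; split => //; last by rewrite addn1.
by apply/existsP; exists e.
Qed.

(* Without a lollipop of size [size p + 2], the endpoint of a path [p] from
   [v] carries no parallel edges: [p] followed by the resulting 2-cycle
   would be one. *)
Lemma no_parallel_at_end (v : T) (p : seq T) :
  is_path ends p -> head v p = v -> ~ lollipop v (size p).+2 ->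
  forall e1 e2 w, joins ends e1 (last v p) w -> joins ends e2 (last v p) w ->
  e1 = e2.
Proof.
move=> Pp head_p no_lol e1 e2 w j1 j2.
have no_loop := no_loop_at_end Pp head_p (no_lollipop_pred no_lol).
have [//|e1_neq_e2] := eqVneq e1 e2; case: no_lol.
exists p, [:: last v p; w]; split => //; last by rewrite addn2.
rewrite /= andbC; apply/andP; split.
  apply/existsP; exists e1; apply/existsP; exists e2.
  by rewrite e1_neq_e2 j1 j2.
by apply: contraTneq j1 => <-; rewrite /joins orbb; apply: no_loop.
Qed.

Lemma end_neighbours (v : T) (p : seq T) :
  is_path ends p -> head v p = v -> ~ lollipop v (size p).+1 ->
  [set w | adj (last v p) w] \subset
    extensions v p :|: (if 1 < size p then [set nth v p (size p).-2] else set0).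
Proof.
move=> Pp head_p no_lol; apply/subsetP => w; rewrite !inE => adj_w.
case: (boolP (w \in p)) => [w_p|]; last by rewrite adj_w.
have w_neq : w != last v p.
  apply: contraTneq adj_w => ->; apply/existsP => -[e]; rewrite /joins orbb.
  exact/negP/(no_loop_at_end Pp head_p no_lol).
rewrite andbF; case: ifP => [_|short].
  by rewrite inE; apply/eqP; apply: back_neighbour.
have [x p_x] : exists x, p = [:: x].
  by case: (p) (Pp) short => [|x [|]] // _ _; exists x.
by move: w_p w_neq; rewrite p_x inE => /eqP ->; rewrite eqxx.
Qed.

Lemma growth (v : T) (p : seq T) :
  is_path ends p -> head v p = v -> ~ lollipop v (size p).+2 ->
  deg ends (last v p) <= #|extensions v p| + (1 < size p).
Proof.
move=> Pp head_p no_lol; have no_lol' := no_lollipop_pred no_lol.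
have no_loop := no_loop_at_end Pp head_p no_lol'.
have no_parallel := no_parallel_at_end Pp head_p no_lol.
apply: leq_trans (deg_le_neighbours no_loop no_parallel) _.
apply: leq_trans (subset_leq_card (end_neighbours Pp head_p no_lol')) _.
apply: leq_trans (leq_card_setU _ _) _.
by rewrite leq_add2l; case: (1 < size p); rewrite ?cards1 ?cards0.
Qed.

Lemma extend_path (v : T) (p : seq T) (w : T) :
  is_path ends p -> head v p = v -> w \in extensions v p ->
  is_path ends (rcons p w) /\ head v (rcons p w) = v.
Proof.
case: p => [//|x p] /and3P [_ Up Sp] /= head_p.
rewrite inE => /andP [adj_w w_p].
split => //; apply/and3P; split.
- by case: (p).
- by rewrite -rcons_cons rcons_uniq w_p.
- by rewrite /= rcons_path; apply/andP.
Qed.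

Section Branching.
Variable v : T.
Hypothesis deg_v : 1 <= deg ends v.
Hypothesis deg_others : forall u, u != v -> 3 <= deg ends u.

Lemma branching (p : seq T) :
  is_path ends p -> head v p = v -> ~ lollipop v (size p).+2 ->
  (1 < size p).+1 <= #|extensions v p|.
Proof.
move=> Pp head_p no_lol; have := growth Pp head_p no_lol.
case: (p) Pp head_p => [//|x [|y q]] /and3P [_ Up _] /= hx grow; subst x.
  by rewrite addn0 in grow; apply: leq_trans grow.
have end_neq : last y q != v.
  by apply: contraNneq (andP Up).1 => <-; apply: mem_last.
by have := deg_others end_neq; rewrite addn1 in grow; lia.
Qed.

Lemma level_paths (J : nat) : 0 < J -> ~ lollipop v J.+1 ->
  exists L : seq (seq T), [/\ uniq L,
    forall p : seq T, p \in L -> [/\ is_path ends p, head v p = v & size p = J]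
    & 2 ^ (J - 2) <= size L].
Proof.
elim: J => [//|J IHJ] _ no_lol.
have [->|J_pos] := posnP J.
  by exists [:: [:: v]]; split => // p; rewrite inE => /eqP ->.
have [L [UL L_paths L_size]] :=
  IHJ J_pos (no_lollipop_pred no_lol).
exists [seq rcons p w | p <- L, w <- enum (extensions v p)]; split.
- by apply: uniq_extensions => // p; apply: enum_uniq.
- move=> _ /allpairsPdep [p [w [p_L w_ext ->]]].
  have [Pp head_p size_p] := L_paths p p_L.
  rewrite mem_enum in w_ext; have [Pw head_w] := extend_path Pp head_p w_ext.
  by rewrite size_rcons size_p.
have ext_ge p : p \in L -> (1 < J).+1 <= size (enum (extensions v p)).
  move=> p_L; have [Pp head_p size_p] := L_paths p p_L.
  by rewrite -cardE -size_p; apply: branching; rewrite // size_p.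
rewrite size_allpairs_dep; apply: leq_trans (sumn_map_ge ext_ge).
case: ltnP => [J_gt1|J_le1].
  by rewrite (_ : J.+1 - 2 = (J - 2).+1) ?expnS ?leq_mul2l //; lia.
by rewrite mul1n (_ : J = 1) // in L_size *; lia.
Qed.

Lemma short_paths (J : nat) : 0 < J -> ~ lollipop v J.+1 ->
  exists A : seq (seq T), [/\ uniq A,
    forall p : seq T, p \in A -> [/\ is_path ends p, head v p = v & size p <= J]
    & 2 ^ (J - 1) <= size A].
Proof.
elim: J => [//|J IHJ] _ no_lol.
have [->|J_pos] := posnP J.
  by exists [:: [:: v]]; split => // p; rewrite inE => /eqP ->.
have [A [UA A_paths A_size]] :=
  IHJ J_pos (no_lollipop_pred no_lol).
have [L [UL L_paths L_size]] := level_paths (ltn0Sn J) no_lol.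
exists (A ++ L); split.
- rewrite cat_uniq UA UL andbT /=; apply/hasPn => p /L_paths [_ _ size_p].
  by apply/negP => /A_paths [_ _]; rewrite size_p ltnn.
- move=> p; rewrite mem_cat.
  by case/orP => [/A_paths [Pp head_p /leqW size_p]|/L_paths [Pp head_p ->]].
- rewrite subSS in L_size; rewrite size_cat subn1 /=.
  by rewrite -[in 2 ^ J](prednK J_pos) expnS mul2n -addnn -subn1 leq_add.
Qed.

(* On at most two vertices there is no path on three vertices, so a
   lollipop of size 4 must exist. *)
Lemma lollipop_tiny : #|T| <= 2 -> lollipop v 4.
Proof.
move=> tiny; case: (classic (lollipop v 4)) => // no_lol.
have [[|p L] [_ L_paths L_size]] := level_paths (isT : 0 < 3) no_lol => //.
have [/and3P [_ Up _] _ size_p] := L_paths p (mem_head _ _).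
by have := max_card (mem p); rewrite (card_uniqP Up) size_p; lia.
Qed.

(* With [t = floor (log2 #|T|)] there is a lollipop of size [2 t + 3]:
   otherwise there are at least [2 ^ (t + 1) > #|T|] paths from [v] on at
   most [t + 2] vertices, two of which share their endpoint. *)
Lemma lollipop_log : lollipop v (2 * trunc_log 2 #|T| + 3).
Proof.
set t := trunc_log 2 #|T|.
case: (classic (lollipop v t.+3)) => [|no_lol].
  by apply: lollipop_mono; lia.
have [A [UA A_paths A_size]] := short_paths (ltn0Sn t.+1) no_lol.
have many : #|T| < size A.
  apply: leq_trans (@trunc_log_ltn 2 #|T| isT) _.
  by rewrite subSS subn0 in A_size.
have [p [q [p_A q_A p_neq_q same_end]]] := pigeonhole (last v) UA many.
have [Pp head_p size_p] := A_paths p p_A.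
have [Pq head_q size_q] := A_paths q q_A.
apply: lollipop_mono (two_paths_lollipop Pp head_p Pq head_q same_end p_neq_q).
lia.
Qed.

End Branching.
End Multigraph.

Lemma INR_expn (m n : nat) : INR (m ^ n) = (INR m ^ n)%R.
Proof. by elim: n => [//|n IHn]; rewrite expnS -multE mult_INR IHn. Qed.

Lemma exp_log_bound (s : nat) : 2 < s -> 2 ^ (2 * trunc_log 2 s + 3) <= s ^ 4.
Proof.
move=> s_gt2; set t := trunc_log 2 s.
have t_pos : 0 < t by apply: trunc_log_max; last exact: ltnW.
have [t_le1|t_gt1] := leqP t 1.
  rewrite (_ : t = 1); last by lia.
  by apply: leq_trans (_ : 3 ^ 4 <= s ^ 4); rewrite ?leq_exp2r.
apply: leq_trans (_ : 2 ^ (4 * t) <= _); first by rewrite leq_exp2l //; lia.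
by rewrite mulnC expnM leq_exp2r // trunc_logP //; lia.
Qed.

Lemma log2_bound (n s : nat) :
  0 < s -> 2 ^ n <= s ^ 4 -> (INR n <= 4 * log2 (INR s))%R.
Proof.
move=> s_pos le_pow.
have ln2_pos : (0 < ln 2)%R by have := ln_lt_2; lra.
have sR_pos : (0 < INR s)%R by apply/lt_0_INR/ltP.
have powR_le : (2 ^ n <= INR s ^ 4)%R.
  by rewrite (_ : 2%R = INR 2) // -!INR_expn; apply/le_INR/leP.
have ln_le : (INR n * ln 2 <= 4 * ln (INR s))%R.
  have pow2_pos : (0 < 2 ^ n)%R by apply: pow_lt; lra.
  rewrite -ln_pow; last lra.
  rewrite (_ : 4%R = INR 4); last by rewrite /=; lra.
  rewrite -ln_pow //.
  case: (Rle_lt_or_eq_dec _ _ powR_le) => [lt_pow|->]; last lra.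
  by apply/Rlt_le/ln_increasing.
apply: (Rmult_le_reg_r (ln 2)) => //; rewrite /log2.
rewrite (_ : 4 * (ln (INR s) / ln 2) * ln 2 = 4 * ln (INR s))%R //.
by field; lra.
Qed.

Theorem claim2p1 (T E : finType) (ends : E -> T * T) (v : T) :
  2 <= #|T| ->
  1 <= deg ends v ->
  (forall u : T, u != v -> 3 <= deg ends u) ->
  exists (p c : seq T),
    [/\ is_path ends p, is_cycle ends c,
        head v p = v, last v p = head v c &
        (INR (size p + size c) <= 4 * log2 (INR #|T|))%R].
Proof.
move=> two_vertices deg_v deg_others.
suff [K [p [c [Pp Cc head_p last_p size_pc]]] K_bound] :
    exists2 K, lollipop ends v K & 2 ^ K <= #|T| ^ 4.
  exists p, c; split => //; apply: log2_bound; first exact: ltnW.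
  by apply: leq_trans K_bound; rewrite leq_exp2l.
have [tiny|big] := leqP #|T| 2.
  exists 4; first exact: lollipop_tiny.
  by rewrite (_ : #|T| = 2) //; lia.
exists (2 * trunc_log 2 #|T| + 3); last exact: exp_log_bound.
exact: lollipop_log.
Qed.
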